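(* Let $n,p\ge1$ be integers and let $\mathbf{A}^{p+1}_{n+1}=\langle A;\odot,\Rightarrow,\wedge,\vee,\bot,\top\rangle$ be as defined in the context. Then: (i) $\langle A;\odot,\top\rangle$ is a commutative monoid; (ii) $\le$ is a lattice order on $A$ and $\langle A;\wedge,\vee,\bot,\top\rangle$ is a bounded distributive lattice with least element $\bot=\langle(n,0),0\rangle$ and greatest element $\top=\langle(n,0),p\rangle$; (iii) for all $a,b,c\in A$, $a\odot b\le c$ iff $a\le b\Rightarrow c$; (iv) $\mathbf{A}^{p+1}_{n+1}$ is involutive: for every $a\in A$, $(a\Rightarrow\bot)\Rightarrow\bot=a$.
   Context: Order $\mathbb{Z}\times\mathbb{Z}$ lexicographically: $(m,r)\preccurlyeq(k,s)$ iff $m<k$, or $m=k$ and $r\le s$; addition/subtraction of pairs is componentwise, and $\min,\max$ of pairs refer to $\preccurlyeq$. For an integer $n\ge1$ let $L^\omega_{n+1}=\{(m,r)\in\mathbb{Z}^2:(0,0)\preccurlyeq(m,r)\preccurlyeq(n,0)\}$ with $x\ast y=\max\{(0,0),x+y-(n,0)\}$ and $x\to y=\min\{(n,0),(n,0)-x+y\}$. For an integer $p\ge1$ let $L_{p+1}=\{0,1,\dots,p\}$ with $\alpha\ast\beta=\max\{0,\alpha+\beta-p\}$. Define $$A=A^{p+1}_{n+1}=\{\langle(m,r),\alpha\rangle:(m,r)\in L^\omega_{n+1},\ \alpha\in\{0,p\}\}\cup\{\langle(m,r),\alpha\rangle:(0,0)\preccurlyeq(m,r)\preccurlyeq(n-1,0),\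 0<\alpha<p\}.$$ Order: $\langle(m,r),\alpha\rangle\le\langle(k,s),\beta\rangle$ iff one of: (o1) $\alpha\neq0$, $\alpha\le\beta$ and $(m,r)\preccurlyeq(k,s)$; (o2) $\alpha=\beta=0$ and $(k,s)\preccurlyeq(m,r)$; (o3) $\alpha=0$, $\beta\ne0$ and $(n-1,0)\preccurlyeq(m+k,r+s)$. $\wedge,\vee$ denote meet and join for $\le$. Put $\bot=\langle(n,0),0\rangle$, $\top=\langle(n,0),p\rangle$. For $a=\langle(m,r),\alpha\rangle$, $b=\langle(k,s),\beta\rangle\in A$ define $a\odot b$ by: (P1) if $\alpha,\beta\ge1$ and $\alpha+\beta>p$: $a\odot b=\langle(m,r)\ast(k,s),\alpha+\beta-p\rangle$; (P2) if $\alpha,\beta\ge1$ and $\alpha+\beta\le p$: $a\odot b=\langle\min\{(n,0),(2n-(m+k+1),-(r+s))\},0\rangle$; (P3) if $\alpha\ge1$, $\beta=0$: $a\odot b=\langle(m,r)\to(k,s),0\rangle$, and if $\alpha=0$, $\beta\ge1$: $a\odot b=\langle(k,s)\to(m,r),0\rangle$; (P4) if $\alpha=\beta=0$: $a\odot b=\langle\min\{(n,0),(m+k+1,r+s)\},0\rangle$. Define $\sim\langle(m,r),\alpha\rangle=\langle(m,r),p-\alpha\rangle$ if $\alpha\in\{0,p\}$, and $\sim\langle(m,r),\alpha\rangle=\langle(n-1-m,-r),p-\alpha\rangle$ if $0<\alpha<p$. Define $a\Rightarrow b=\sim(a\odot\sim b)$. The algebra $\mathbf{A}^{p+1}_{n+1}$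 is $\langle A;\odot,\Rightarrow,\wedge,\vee,\bot,\top\rangle$. *)

From Stdlib Require Import ZArith Bool.
Open Scope bool_scope.
Open Scope Z_scope.

Definition pr := (Z * Z)%type.

Definition lexleb (x y : pr) : bool :=
  (fst x <? fst y) || ((fst x =? fst y) && (snd x <=? snd y)).
Definition lexle (x y : pr) : Prop := lexleb x y = true.

Definition padd (x y : pr) : pr := (fst x + fst y, snd x + snd y).
Definition psub (x y : pr) : pr := (fst x - fst y, snd x - snd y).
Definition lmin (x y : pr) : pr := if lexleb x y then x else y.
Definition lmax (x y : pr) : pr := if lexleb x y then y else x.

Section Alg.
Variables n p : Z.

Definition inLw (x : pr) : Prop := lexle (0,0) x /\ lexle x (n,0).

Definition pstar (x y : pr) : pr := lmax (0,0) (psub (padd x y) (n,0)).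
Definition parr (x y : pr) : pr := lmin (n,0) (padd (psub (n,0) x) y).

(** Elements <(m,r),alpha> are represented as ((m,r), alpha). *)
Definition elt := (pr * Z)%type.

Definition inA (a : elt) : Prop :=
  let (x, al) := a in
  (inLw x /\ (al = 0 \/ al = p)) \/
  (lexle (0,0) x /\ lexle x (n-1,0) /\ 0 < al < p).

Definition le (a b : elt) : Prop :=
  let (x, al) := a in let (y, be) := b in
  (al <> 0 /\ al <= be /\ lexle x y) \/
  (al = 0 /\ be = 0 /\ lexle y x) \/
  (al = 0 /\ be <> 0 /\ lexle (n-1,0) (padd x y)).

Definition bot : elt := ((n,0), 0).
Definition top : elt := ((n,0), p).

Definition odot (a b : elt) : elt :=
  let (x, al) := a in let (y, be) := b in
  if (1 <=? al) && (1 <=? be) then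
    if p <? al + be then (pstar x y, al + be - p)
    else (lmin (n,0) (2*n - (fst x + fst y + 1), - (snd x + snd y)), 0)
  else if (1 <=? al) then (parr x y, 0)
  else if (1 <=? be) then (parr y x, 0)
  else (lmin (n,0) (fst x + fst y + 1, snd x + snd y), 0).

Definition neg (a : elt) : elt :=
  let (x, al) := a in
  if (al =? 0) || (al =? p) then (x, p - al)
  else ((n - 1 - fst x, - snd x), p - al).

Definition imp (a b : elt) : elt := neg (odot a (neg b)).

Definition is_meet (a b m : elt) : Prop :=
  inA m /\ le m a /\ le m b /\
  forall x, inA x -> le x a -> le x b -> le x m.
Definition is_join (a b j : elt) : Prop :=
  inA j /\ le a j /\ le b j /\
  forall x, inA x -> le a x -> le b x -> le j x.
End Alg.

From Stdlib Require Import ZArith Lia Bool.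
Open Scope Z_scope.

(* Every element is a triple of integers, and the order and all operations are
   piecewise linear: they are defined by finitely many (lexicographic)
   comparisons of linear expressions in the coordinates.  So once the three
   kinds of elements (alpha = 0, alpha = p, 0 < alpha < p) are separated, every
   order and monoid law, as well as distributivity of the explicit meet and
   join below, becomes linear integer arithmetic in each branch.
   Residuation and involutivity are then structural: with the involution ~,
   a <= b iff a (.) ~b = bot, so by associativity both sides of residuation
   say a (.) (b (.) ~c) = bot; and a => bot = ~(a (.) top) = ~a. *)

Lemma lexleb_true a b c d :
  lexleb (a,b) (c,d) = true -> a < c \/ (a = c /\ b <= d).
Proof. unfold lexleb; simpl; lia. Qed.

Lemma lexleb_false a b c d :
  lexleb (a,b) (c,d) = false -> c < a \/ (a = c /\ d < b).
Proof. unfold lexleb; simpl; lia. Qed.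

Lemma lexle_iff a b c d : lexle (a,b) (c,d) <-> a < c \/ (a = c /\ b <= d).
Proof. unfold lexle, lexleb; simpl; lia. Qed.

Lemma pair3_eq_iff (a b c d e f : Z) :
  ((a,b),c) = ((d,e),f) <-> a = d /\ b = e /\ c = f.
Proof. split; [intros H; inversion H; auto | intros (-> & -> & ->); reflexivity]. Qed.

Lemma inA_cases n p m r al : 1 <= p -> inA n p ((m,r),al) ->
  (al = 0 /\ lexle (0,0) (m,r) /\ lexle (m,r) (n,0)) \/
  (al = p /\ lexle (0,0) (m,r) /\ lexle (m,r) (n,0)) \/
  (0 < al < p /\ lexle (0,0) (m,r) /\ lexle (m,r) (n-1,0)).
Proof. unfold inA, inLw, lexle, lexleb; cbv beta iota delta [fst snd]; intros; lia. Qed.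

(* The mixed cases come from (o3): for alpha = 0 < beta, <x,alpha> <= <y,beta>
   iff (n-1,0) - y <= x. *)
Definition meet (n : Z) (a b : elt) : elt :=
  let (x, al) := a in let (y, be) := b in
  if (al =? 0) && (be =? 0) then (lmax x y, 0)
  else if al =? 0 then (lmax x (psub (n-1,0) y), 0)
  else if be =? 0 then (lmax y (psub (n-1,0) x), 0)
  else (lmin x y, if al <=? be then al else be).

Definition join (n : Z) (a b : elt) : elt :=
  let (x, al) := a in let (y, be) := b in
  if (al =? 0) && (be =? 0) then (lmin x y, 0)
  else if al =? 0 then (lmax y (psub (n-1,0) x), be)
  else if be =? 0 then (lmax x (psub (n-1,0) y), al)
  else (lmax x y, if al <=? be then be else al).

Ltac destruct_elts := repeat match goal with
  | a : elt |- _ => destruct a as [[? ?] ?]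
  | a : pr |- _ => destruct a
  end.

Ltac split_inA hp := repeat match goal with
  | H : inA _ _ ((?m,?r),?al) |- _ =>
      apply (inA_cases _ _ m r al hp) in H;
      destruct H as [(? & ? & ?)|[(? & ? & ?)|(? & ? & ?)]]; try subst al
  end.

Ltac lexle_to_Z := repeat match goal with
  | H : context [lexle (_,_) (_,_)] |- _ => rewrite !lexle_iff in H
  | |- context [lexle (_,_) (_,_)] => rewrite !lexle_iff
  end.

Ltac reflect_test E := first
  [ apply lexleb_true in E | apply lexleb_false in E
  | rewrite ?andb_true_iff, ?andb_false_iff, ?orb_true_iff, ?orb_false_iff,
      ?Z.leb_le, ?Z.leb_gt, ?Z.ltb_lt, ?Z.ltb_ge, ?Z.eqb_eq, ?Z.eqb_neq in E ].

Ltac split_ifs := repeat (match goal with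
  | |- context [if ?b then _ else _] =>
      lazymatch b with context [if _ then _ else _] => fail | _ =>
        let E := fresh "E" in destruct b eqn:E; reflect_test E end
  | H : context [if ?b then _ else _] |- _ =>
      lazymatch b with context [if _ then _ else _] => fail | _ =>
        let E := fresh "E" in destruct b eqn:E; reflect_test E end
  end; cbv beta iota delta [fst snd] in *; try (exfalso; lia)).

Ltac decide_A hp :=
  intros; destruct_elts; split_inA hp;
  unfold meet, join, imp, inA, inLw, le, odot, neg, pstar, parr, lmin, lmax,
    psub, padd, top, bot in *;
  cbv beta iota delta [fst snd] in *; lexle_to_Z; split_ifs; lexle_to_Z;
  rewrite ?pair3_eq_iff; lia.

Section Algebra.
Variables n p : Z.
Hypothesis hn : 1 <= n.
Hypothesis hp : 1 <= p.

Lemma bot_in : inA n p (bot n).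
Proof. decide_A hp. Qed.
Lemma top_in : inA n p (top n p).
Proof. decide_A hp. Qed.
Lemma bot_le a : inA n p a -> le n (bot n) a.
Proof. decide_A hp. Qed.
Lemma le_top a : inA n p a -> le n a (top n p).
Proof. decide_A hp. Qed.

Lemma le_refl a : inA n p a -> le n a a.
Proof. decide_A hp. Qed.
Lemma le_antisym a b : inA n p a -> inA n p b -> le n a b -> le n b a -> a = b.
Proof. decide_A hp. Qed.
Lemma le_trans a b c : inA n p a -> inA n p b -> inA n p c ->
  le n a b -> le n b c -> le n a c.
Proof. decide_A hp. Qed.

Lemma meet_in a b : inA n p a -> inA n p b -> inA n p (meet n a b).
Proof. decide_A hp. Qed.
Lemma meet_le_l a b : inA n p a -> inA n p b -> le n (meet n a b) a.
Proof. decide_A hp. Qed.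
Lemma meet_le_r a b : inA n p a -> inA n p b -> le n (meet n a b) b.
Proof. decide_A hp. Qed.
Lemma le_meet a b c : inA n p a -> inA n p b -> inA n p c ->
  le n c a -> le n c b -> le n c (meet n a b).
Proof. decide_A hp. Qed.

Lemma join_in a b : inA n p a -> inA n p b -> inA n p (join n a b).
Proof. decide_A hp. Qed.
Lemma le_join_l a b : inA n p a -> inA n p b -> le n a (join n a b).
Proof. decide_A hp. Qed.
Lemma le_join_r a b : inA n p a -> inA n p b -> le n b (join n a b).
Proof. decide_A hp. Qed.
Lemma join_le a b c : inA n p a -> inA n p b -> inA n p c ->
  le n a c -> le n b c -> le n (join n a b) c.
Proof. decide_A hp. Qed.

Lemma meet_join_distr a b c : inA n p a -> inA n p b -> inA n p c ->
  meet n a (join n b c) = join n (meet n a b) (meet n a c).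
Proof. decide_A hp. Qed.

Lemma odot_in a b : inA n p a -> inA n p b -> inA n p (odot n p a b).
Proof. decide_A hp. Qed.
Lemma odot_comm a b : inA n p a -> inA n p b -> odot n p a b = odot n p b a.
Proof. decide_A hp. Qed.
Lemma odot_top a : inA n p a -> odot n p a (top n p) = a.
Proof. decide_A hp. Qed.
Lemma odot_assoc a b c : inA n p a -> inA n p b -> inA n p c ->
  odot n p (odot n p a b) c = odot n p a (odot n p b c).
Proof. decide_A hp. Qed.

Lemma neg_in a : inA n p a -> inA n p (neg n p a).
Proof. decide_A hp. Qed.
Lemma neg_involutive a : inA n p a -> neg n p (neg n p a) = a.
Proof. decide_A hp. Qed.
Lemma le_iff_odot_neg_bot a b : inA n p a -> inA n p b ->
  le n a b <-> odot n p a (neg n p b) = bot n.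
Proof. decide_A hp. Qed.

Lemma neg_bot : neg n p (bot n) = top n p.
Proof. unfold neg, bot, top; simpl; now rewrite Z.sub_0_r. Qed.

Lemma imp_in a b : inA n p a -> inA n p b -> inA n p (imp n p a b).
Proof. intros Ha Hb; unfold imp; auto using neg_in, odot_in. Qed.

Lemma residuation a b c : inA n p a -> inA n p b -> inA n p c ->
  le n (odot n p a b) c <-> le n a (imp n p b c).
Proof.
  intros Ha Hb Hc; unfold imp.
  assert (Hbc : inA n p (odot n p b (neg n p c))) by auto using odot_in, neg_in.
  rewrite le_iff_odot_neg_bot, odot_assoc, le_iff_odot_neg_bot, neg_involutive;
    auto using odot_in, neg_in; reflexivity.
Qed.

Lemma imp_bot a : inA n p a -> imp n p a (bot n) = neg n p a.
Proof. intros Ha; unfold imp; now rewrite neg_bot, odot_top. Qed.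

Lemma imp_bot_involutive a : inA n p a -> imp n p (imp n p a (bot n)) (bot n) = a.
Proof.
  intros Ha; rewrite (imp_bot a Ha), (imp_bot (neg n p a)) by auto using neg_in.
  now apply neg_involutive.
Qed.

Lemma is_meet_meet a b : inA n p a -> inA n p b -> is_meet n p a b (meet n a b).
Proof. repeat split; auto using meet_in, meet_le_l, meet_le_r, le_meet. Qed.

Lemma is_join_join a b : inA n p a -> inA n p b -> is_join n p a b (join n a b).
Proof. repeat split; auto using join_in, le_join_l, le_join_r, join_le. Qed.

Lemma is_meet_unique a b m : inA n p a -> inA n p b ->
  is_meet n p a b m -> m = meet n a b.
Proof.
  intros Ha Hb (Hm & Hma & Hmb & Hglb).
  apply le_antisym; auto using meet_in, le_meet, meet_le_l, meet_le_r.
Qed.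

Lemma is_join_unique a b j : inA n p a -> inA n p b ->
  is_join n p a b j -> j = join n a b.
Proof.
  intros Ha Hb (Hj & Haj & Hbj & Hlub).
  apply le_antisym; auto using join_in, join_le, le_join_l, le_join_r.
Qed.

Lemma is_meet_join_distr a b c d e f g : inA n p a -> inA n p b -> inA n p c ->
  is_join n p b c d -> is_meet n p a d e ->
  is_meet n p a b f -> is_meet n p a c g -> is_join n p f g e.
Proof.
  intros Ha Hb Hc Hd He Hf Hg.
  assert (Hd_in : inA n p d) by apply Hd.
  rewrite (is_meet_unique _ _ _ Ha Hd_in He), (is_join_unique _ _ _ Hb Hc Hd),
    (is_meet_unique _ _ _ Ha Hb Hf), (is_meet_unique _ _ _ Ha Hc Hg),
    meet_join_distr by assumption.
  auto using is_join_join, meet_in.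
Qed.
End Algebra.

Theorem theorem3p1 (n p : Z) (hn : 1 <= n) (hp : 1 <= p) :
  (inA n p (top n p) /\
   (forall a b, inA n p a -> inA n p b -> inA n p (odot n p a b)) /\
   (forall a b c, inA n p a -> inA n p b -> inA n p c ->
      odot n p (odot n p a b) c = odot n p a (odot n p b c)) /\
   (forall a b, inA n p a -> inA n p b -> odot n p a b = odot n p b a) /\
   (forall a, inA n p a -> odot n p a (top n p) = a)) /\
  ((forall a, inA n p a -> le n a a) /\
   (forall a b, inA n p a -> inA n p b -> le n a b -> le n b a -> a = b) /\
   (forall a b c, inA n p a -> inA n p b -> inA n p c ->
      le n a b -> le n b c -> le n a c) /\
   (forall a b, inA n p a -> inA n p b ->
      (exists m, is_meet n p a b m) /\ (exists j, is_join n p a b j)) /\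
   (forall a b c d e f g, inA n p a -> inA n p b -> inA n p c ->
      is_join n p b c d -> is_meet n p a d e ->
      is_meet n p a b f -> is_meet n p a c g -> is_join n p f g e) /\
   inA n p (bot n) /\ inA n p (top n p) /\
   (forall a, inA n p a -> le n (bot n) a /\ le n a (top n p))) /\
  ((forall a b, inA n p a -> inA n p b -> inA n p (imp n p a b)) /\
   (forall a b c, inA n p a -> inA n p b -> inA n p c ->
      (le n (odot n p a b) c <-> le n a (imp n p b c)))) /\
  (forall a, inA n p a -> imp n p (imp n p a (bot n)) (bot n) = a).
Proof.
  split; [|split; [|split]].
  - repeat split; intros.
    + now apply top_in.
    + now apply odot_in.
    + now apply odot_assoc.
    + now apply odot_comm.
    + now apply odot_top.
  - split; [|split; [|split; [|split; [|split; [|split; [|split]]]]]]; intros.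
    + now apply (le_refl n p).
    + now apply (le_antisym n p).
    + now apply (le_trans n p) with b.
    + split; [exists (meet n a b) | exists (join n a b)].
      * now apply is_meet_meet.
      * now apply is_join_join.
    + now apply (is_meet_join_distr n p hn hp a b c d).
    + now apply bot_in.
    + now apply top_in.
    + split; [now apply (bot_le n p) | now apply le_top].
  - split; intros; [now apply imp_in | now apply residuation].
  - intros; now apply imp_bot_involutive.
Qed.
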